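(* Let $E\subseteq Z$ be nonempty, $\gamma\in\Delta^\circ(E)$, $i\in\mathcal I$ and $\theta,\theta'\in\Theta$. Then $$\big[\mathcal L_i^Y(\eta,\theta)\subseteq\mathcal L_i^Y(\eta,\theta')\text{ for all }\eta\in\Delta(E)\big]\iff\mathcal L_i^Y(\gamma,\theta)\subseteq\mathcal L_i^Y(\gamma,\theta').$$
   Context: $Z$ is a finite set, $Y=\Delta(Z)$, $\mathcal I$ a finite set of agents, $\Theta$ a set of states; for each $(i,\theta)$, $u_i^\theta:Z\to\mathbb R$ and $U_i^\theta(y)=\sum_zy_zu_i^\theta(z)$. $\mathcal L_i^Y(\alpha,\theta)=\{y\in Y:U_i^\theta(\alpha)\ge U_i^\theta(y)\}$. For nonempty $E\subseteq Z$, $\Delta(E)$ is the set of lotteries supported in $E$ and $\Delta^\circ(E)$ the set of lotteries whose support is exactly $E$. *)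

From mathcomp Require Import all_boot all_order all_algebra.
From mathcomp Require Import reals.
Set Implicit Arguments. Unset Strict Implicit. Unset Printing Implicit Defensive.
Import Order.TTheory GRing.Theory Num.Theory.
Local Open Scope ring_scope.

Section Defs.
Variables (R : realType) (Z : finType).

(* Y = Delta(Z): lotteries on the finite set Z *)
Definition lottery (y : {ffun Z -> R}) : Prop :=
  (forall z, 0 <= y z) /\ \sum_(z : Z) y z = 1.

Definition lotteryOn (E : {set Z}) (y : {ffun Z -> R}) : Prop :=
  lottery y /\ (forall z, z \notin E -> y z = 0).

(* Delta°(E): lotteries whose support is exactly E *)
Definition lotteryFull (E : {set Z}) (y : {ffun Z -> R}) : Prop :=
  lottery y /\ (forall z, (y z != 0) = (z \in E)).

Definition EU (u : Z -> R) (y : {ffun Z -> R}) : R := \sum_(z : Z) y z * u z.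

Definition lowerY (u : Z -> R) (alpha : {ffun Z -> R}) (y : {ffun Z -> R}) : Prop :=
  lottery y /\ EU u y <= EU u alpha.
End Defs.

From mathcomp Require Import all_boot all_order all_algebra.
From mathcomp Require Import reals.
From mathcomp Require Import ring.
Set Implicit Arguments. Unset Strict Implicit. Unset Printing Implicit Defensive.
Import Order.TTheory GRing.Theory Num.Theory.
Local Open Scope ring_scope.

(* Lower contour sets at a full-support lottery gamma of
   Delta(E) control those at every eta in Delta(E), because gamma lies in
   the relative interior of Delta(E): moving from gamma in the direction
   y - eta by a small enough step l > 0 stays inside Y.
   - "=>": gamma is itself a lottery supported in E.
   - "<=": given eta in Delta(E) and y with U^th(y) <= U^th(eta), the point
     y' = gamma + l (y - eta) is a lottery once 0 < l <= min_{z in E} gamma z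
     (lemma [perturb_lottery]).  By linearity of expected utility
     (lemma [EU_perturb]), for l > 0 we have U(y') <= U(gamma) iff
     U(y) <= U(eta), for every utility U ([perturb_lowerE]).  So y' is in
     L(gamma, th), hence in L(gamma, th'), which translates back to
     U^th'(y) <= U^th'(eta). *)

Section Perturbation.
Variables (R : realType) (Z : finType).
Implicit Types (y g e : {ffun Z -> R}) (E : {set Z}) (u : Z -> R).

Lemma lottery_le1 y z : lottery y -> y z <= 1.
Proof.
move=> [y_ge0 y_sum1]; rewrite -y_sum1 (bigD1 z) //= lerDl.
exact: sumr_ge0.
Qed.

Lemma lotteryFull_lotteryOn E g : lotteryFull E g -> lotteryOn E g.
Proof.
move=> [g_lot g_supp]; split=> // z zNE.
by apply/eqP; rewrite -[_ == _]negbK g_supp.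
Qed.

(* A full-support lottery on E has a uniform positive margin on E:
   the product of its weights on E, each of them in (0, 1]. *)
Lemma lotteryFull_margin E g :
  lotteryFull E g -> exists2 l : R, 0 < l & forall z, z \in E -> l <= g z.
Proof.
move=> [g_lot g_supp].
have g_gt0 z : z \in E -> 0 < g z by rewrite lt_def g_supp g_lot.1 andbT.
exists (\prod_(z in E) g z); first exact: prodr_gt0.
move=> z zE; rewrite (bigD1 z) //= ler_piMr ?(ltW (g_gt0 z zE)) //.
apply: prodr_ile1 => x /andP[xE _].
by rewrite (ltW (g_gt0 x xE)) (lottery_le1 x g_lot).
Qed.

Definition perturb g (l : R) y e : {ffun Z -> R} :=
  [ffun z => g z + l * (y z - e z)].

Lemma EU_perturb u g l y e :
  EU u (perturb g l y e) = EU u g + l * (EU u y - EU u e).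
Proof.
rewrite /EU -sumrB mulr_sumr -big_split /=; apply: eq_bigr => z _.
by rewrite ffunE; ring.
Qed.

Lemma perturb_lottery E g l y e :
  lottery g -> lottery y -> lotteryOn E e -> 0 <= l ->
  (forall z, z \in E -> l <= g z) -> lottery (perturb g l y e).
Proof.
move=> [g_ge0 g_sum1] [y_ge0 y_sum1] [e_lot e_supp] l_ge0 l_le.
split; last first.
  rewrite /perturb; under eq_bigr do rewrite ffunE.
  by rewrite big_split /= -mulr_sumr sumrB g_sum1 y_sum1 e_lot.2 subrr mulr0 addr0.
move=> z; rewrite ffunE mulrBr addrCA.
apply: addr_ge0; first exact: mulr_ge0.
case: (boolP (z \in E)) => zE; last by rewrite e_supp // mulr0 subr0.
rewrite subr_ge0 (le_trans _ (l_le z zE)) //.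
by rewrite ler_piMr // (lottery_le1 z e_lot).
Qed.

Lemma perturb_lowerE u g l y e :
  0 < l -> (EU u (perturb g l y e) <= EU u g) = (EU u y <= EU u e).
Proof. by move=> l_gt0; rewrite EU_perturb gerDl pmulr_rle0 // subr_le0. Qed.

End Perturbation.

Theorem lemma11 (R : realType) (Z : finType) (I Theta : Type)
  (u : I -> Theta -> Z -> R)
  (E : {set Z}) (hE : E != set0)
  (gamma : {ffun Z -> R}) (hgamma : lotteryFull E gamma)
  (i : I) (th th' : Theta) :
  (forall eta : {ffun Z -> R}, lotteryOn E eta ->
     forall y, lowerY (u i th) eta y -> lowerY (u i th') eta y)
  <->
  (forall y, lowerY (u i th) gamma y -> lowerY (u i th') gamma y).
Proof.
split=> [incl_all | incl_gamma eta eta_on y [y_lot y_le]].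
  exact/incl_all/lotteryFull_lotteryOn.
split=> //.
have [l l_gt0 l_le] := lotteryFull_margin hgamma.
have [gamma_lot _] := lotteryFull_lotteryOn hgamma.
have y'_lot : lottery (perturb gamma l y eta).
  exact: perturb_lottery gamma_lot y_lot eta_on (ltW l_gt0) l_le.
have y'_le : EU (u i th) (perturb gamma l y eta) <= EU (u i th) gamma.
  by rewrite perturb_lowerE.
have [_] := incl_gamma _ (conj y'_lot y'_le).
by rewrite perturb_lowerE.
Qed.
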